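(* Let $T\in V^+$ with $\operatorname{rank}_+(T)>r$, and let $X$ be a minimizer of $\|T-X\|$ over $X\in D_r^+$. Then there exist indices $i_1,\dots,i_d$ such that the coordinate $(T-X)_{i_1\dots i_d}>0$.
   Context: For $i=1,\dots,d$, $V_i$ is a real vector space of dimension $n_i$ with a fixed basis; $V_i^+$ is the cone of vectors with nonnegative coordinates. $V=V_1\otimes\cdots\otimes V_d$ with induced basis (coordinates $T_{i_1\dots i_d}$), coordinate inner product and Hilbert–Schmidt norm $\|\cdot\|$; $V^+$ is the set of tensors with nonnegative coordinates. $\operatorname{rank}_+(T)$ is the least $r$ with $T=\sum_{p=1}^r u_{1,p}\otimes\cdots\otimes u_{d,p}$, $u_{i,p}\in V_i^+$; $D_r^+=\{X\in V^+:\operatorname{rank}_+(X)\le r\}$. *)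

From HB Require Import structures.
From mathcomp Require Import all_boot all_order all_algebra.
Set Implicit Arguments. Unset Strict Implicit. Unset Printing Implicit Defensive.
Import Order.TTheory GRing.Theory Num.Theory.
Local Open Scope ring_scope.

Definition midx (d : nat) (n : 'I_d -> nat) : finType :=
  {dffun forall k : 'I_d, 'I_(n k)}.

(* Tensors in V = V_1 (x) ... (x) V_d, identified with their coordinate arrays. *)
Definition tensor (R : rcfType) (d : nat) (n : 'I_d -> nat) :=
  midx n -> R.

Definition nonneg_tensor (R : rcfType) d (n : 'I_d -> nat) (T : tensor R n) :=
  forall i, 0 <= T i.

Definition nnrank_le (R : rcfType) d (n : 'I_d -> nat) (T : tensor R n) (r : nat) :=
  exists u : 'I_r -> forall k : 'I_d, 'I_(n k) -> R,
    (forall p k j, 0 <= u p k j) /\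
    forall i : midx n, T i = \sum_(p < r) \prod_(k < d) u p k (i k).

Definition is_nnrank (R : rcfType) d (n : 'I_d -> nat) (T : tensor R n) (k : nat) :=
  nnrank_le T k /\ forall k', nnrank_le T k' -> (k <= k')%N.

Definition Dr_plus (R : rcfType) d (n : 'I_d -> nat) (r : nat) (X : tensor R n) :=
  nonneg_tensor X /\ exists k, is_nnrank X k /\ (k <= r)%N.

Definition hsnorm (R : rcfType) d (n : 'I_d -> nat) (T : tensor R n) : R :=
  Num.sqrt (\sum_(i : midx n) T i ^+ 2).

Definition tsub (R : rcfType) d (n : 'I_d -> nat) (T X : tensor R n) : tensor R n :=
  fun i => T i - X i.

From HB Require Import structures.
From mathcomp Require Import all_boot all_order all_algebra.
From mathcomp Require Import ring lra.
From Stdlib Require Classical_Prop.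
Set Implicit Arguments.
Unset Strict Implicit.
Unset Printing Implicit Defensive.

Import Order.TTheory GRing.Theory Num.Theory.
Local Open Scope ring_scope.

(* If T <= X coordinatewise, then X cannot equal T (T has nonnegative rank
   > r), so X is strictly larger somewhere.  Then <T, X> < |X|^2, and the
   orthogonal projection c X of T onto the ray through X, with
   c = <T, X> / |X|^2 in [0, 1), is still in D_r^+ but strictly closer to T:
   |T - X|^2 - |T - c X|^2 = |X|^2 (1 - c)^2 > 0. *)

Lemma sum_sqr_subZ (R : comPzRingType) (I : finType) (t x : I -> R) (c : R) :
  \sum_i (t i - c * x i) ^+ 2
  = \sum_i t i ^+ 2 - 2 * c * \sum_i t i * x i + c ^+ 2 * \sum_i x i ^+ 2.
Proof.
rewrite !mulr_sumr -sumrB -big_split /=.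
by apply: eq_bigr => i _; ring.
Qed.

Lemma sum_sqr_sub_proj_lt (R : realFieldType) (I : finType) (t x : I -> R) :
  let B := \sum_i t i * x i in let C := \sum_i x i ^+ 2 in
  0 < C -> B != C ->
  \sum_i (t i - B / C * x i) ^+ 2 < \sum_i (t i - x i) ^+ 2.
Proof.
move=> B C C_gt0 BneC; set c := B / C.
have cC : c * C = B by rewrite /c divfK ?gt_eqF.
have c_neq1 : c != 1 by apply: contraNneq BneC => c1; rewrite -cC c1 mul1r.
have gap_gt0 : 0 < C * (1 - c) ^+ 2.
  by rewrite mulr_gt0 // exprn_even_gt0 //= subr_eq0 eq_sym.
have -> : \sum_i (t i - x i) ^+ 2 = \sum_i (t i - 1 * x i) ^+ 2.
  by apply: eq_bigr => i _; rewrite mul1r.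
rewrite !sum_sqr_subZ -/B -/C -cC.
have : 1 ^+ 2 * C - 2 * 1 * (c * C) - (c ^+ 2 * C - 2 * c * (c * C))
       = C * (1 - c) ^+ 2 by ring.
lra.
Qed.

Lemma sum_mul_lt_sum_sqr (R : realDomainType) (I : finType) (t x : I -> R) i0 :
  (forall i, 0 <= t i <= x i) -> t i0 < x i0 ->
  \sum_i t i * x i < \sum_i x i ^+ 2.
Proof.
move=> tx ti0; rewrite -subr_gt0 -sumrB.
under eq_bigr => i _ do rewrite expr2 -mulrBl.
have gap_ge0 i : 0 <= (x i - t i) * x i.
  by case/andP: (tx i) => t0 tle; rewrite mulr_ge0 ?subr_ge0 ?(le_trans t0).
rewrite (bigD1 i0) //= ltr_pwDl ?sumr_ge0 //.
have [t0 _] := andP (tx i0).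
by rewrite mulr_gt0 ?subr_gt0 // (le_lt_trans t0).
Qed.

Lemma nnrank_leZ (R : rcfType) d (n : 'I_d -> nat) (T : tensor R n) m (c : R) :
  (0 < d)%N -> 0 <= c -> nnrank_le T m -> nnrank_le (fun i => c * T i) m.
Proof.
move=> d_gt0 c_ge0 [u [u_ge0 Tu]]; pose k0 := Ordinal d_gt0.
exists (fun p k j => if k == k0 then c * u p k j else u p k j); split.
  by move=> p k j; case: eqP => _; rewrite ?mulr_ge0.
move=> i; rewrite Tu mulr_sumr; apply: eq_bigr => p _.
rewrite (bigD1 k0) //= [RHS](bigD1 k0) //= ?eqxx mulrA; congr (_ * _).
by apply: eq_bigr => k /negbTE ->.
Qed.

Lemma nnrank_le_is_nnrank (R : rcfType) d (n : 'I_d -> nat) (T : tensor R n) m :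
  nnrank_le T m -> exists2 k, is_nnrank T k & (k <= m)%N.
Proof.
elim/ltn_ind: m => m IH Tm.
case: (Classical_Prop.classic (exists2 k, (k < m)%N & nnrank_le T k)).
  case=> k lt_km Tk; have [k' Tk' le_k'k] := IH k lt_km Tk.
  by exists k' => //; rewrite (leq_trans le_k'k) // ltnW.
move=> no_smaller; exists m => //; split=> // k Tk.
by rewrite leqNgt; apply/negP => lt_km; apply: no_smaller; exists k.
Qed.

Lemma Dr_plusZ (R : rcfType) d (n : 'I_d -> nat) r (X : tensor R n) (c : R) :
  (0 < d)%N -> 0 <= c -> Dr_plus r X -> Dr_plus r (fun i => c * X i).
Proof.
move=> d_gt0 c_ge0 [X_ge0 [k [[Xk _] le_kr]]]; split=> [i|].
  exact: mulr_ge0.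
have [k' cXk' le_k'k] := nnrank_le_is_nnrank (nnrank_leZ d_gt0 c_ge0 Xk).
by exists k'; split; last exact: leq_trans le_kr.
Qed.

Lemma is_nnrank_le_Dr_plus (R : rcfType) d (n : 'I_d -> nat) r (T X : tensor R n) k :
  T =1 X -> is_nnrank T k -> Dr_plus r X -> (k <= r)%N.
Proof.
move=> eq_TX [_ Tmin] [_ [k' [[[u [u_ge0 Xu]] _] le_k'r]]].
apply: leq_trans le_k'r; apply: Tmin; exists u; split=> // i.
by rewrite eq_TX Xu.
Qed.

Lemma hsnorm_lt (R : rcfType) d (n : 'I_d -> nat) (S T : tensor R n) :
  \sum_i S i ^+ 2 < \sum_i T i ^+ 2 -> hsnorm S < hsnorm T.
Proof.
move=> lt_ST; rewrite /hsnorm ltr_sqrt // (le_lt_trans _ lt_ST) //.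
by rewrite sumr_ge0 // => i _; rewrite sqr_ge0.
Qed.

Theorem mainTheorem4 (R : rcfType) (d : nat) (n : 'I_d -> nat) (r : nat)
    (hd : (0 < d)%N)
    (T X : tensor R n)
    (hT : nonneg_tensor T)
    (hrank : exists k, is_nnrank T k /\ (r < k)%N)
    (hX : Dr_plus r X)
    (hmin : forall Y : tensor R n, Dr_plus r Y -> hsnorm (tsub T X) <= hsnorm (tsub T Y)) :
  exists i : midx n, 0 < tsub T X i.
Proof.
apply/existsP; apply: contraT => /existsPn T_le_X.
have TX i : 0 <= T i <= X i by rewrite hT -subr_le0 leNgt T_le_X.
have [i0 lt_TX] : exists i0, T i0 < X i0.
  apply/existsP; apply: contraT => /existsPn X_le_T.
  have eq_TX : T =1 X.
    by move=> i; apply/eqP; rewrite eq_le [X i <= _]leNgt X_le_T andbT; case/andP: (TX i).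
  have [k [Tk lt_rk]] := hrank.
  by have := leq_trans lt_rk (is_nnrank_le_Dr_plus eq_TX Tk hX); rewrite ltnn.
pose B := \sum_i T i * X i; pose C := \sum_i X i ^+ 2.
have lt_BC : B < C := sum_mul_lt_sum_sqr TX lt_TX.
have B_ge0 : 0 <= B.
  by rewrite sumr_ge0 // => i _; case/andP: (TX i) => t0 tx; rewrite mulr_ge0 ?(le_trans t0).
have C_gt0 : 0 < C := le_lt_trans B_ge0 lt_BC.
have proj_in_Dr : Dr_plus r (fun i => B / C * X i).
  exact: Dr_plusZ hd (divr_ge0 B_ge0 (ltW C_gt0)) hX.
have := hmin _ proj_in_Dr; rewrite leNgt => /negP[].
by apply/hsnorm_lt/sum_sqr_sub_proj_lt; rewrite // lt_eqF.
Qed.
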